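(* Let $E=(e_1,\dots,e_{4n-1})$ be a positively oriented $J$-basis. The stem-quadrant $SQ(E)=\{\vec u\in\mathbb{R}^{4n-1}:\vec u+\mathcal{H}_E\subset\mathcal{H}_E\}$ equals the closed convex cone $\{-\alpha e_1+\beta e_{4n-1}:\alpha,\beta\ge0\}$ generated by $-e_1$ and $e_{4n-1}$.
   Context: $\mathbb{R}^{2n,2n-1}$ is $\mathbb{R}^{4n-1}$ with form $v^TJw$, $J$ antidiagonal with $J_{i,4n-i}=(-1)^i$; a $J$-basis is one in which the Gram matrix is $J$. For a nonzero vector $v$, $S^+_E(v)$ (resp. $S^-_E(v)$) is the number of sign changes of its coordinate sequence in $E$ when signs are assigned to zero coordinates so as to maximize (resp. minimize) this number. $\mathcal{H}_E=\{v: S^+_E(v)\le 2n-1$, and in case of equality the sign of the last coordinate used in computing $S^+_E$ is positive$\}$ (the open crooked halfspace); $\overline{\mathcal{H}}_E=\{v: S^-_E(v)\le 2n-1$, and in case of equality the last nonzero coordinate is positive$\}$ is its closure. *)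

(* Vectors of R^{4n-1} are row vectors 'rV[R]_(4*n-1);
   a basis E = (e_1,...,e_{4n-1}) is the matrix whose i-th row is e_{i+1}. *)
From HB Require Import structures.
From mathcomp Require Import all_boot all_order all_algebra.
Set Implicit Arguments. Unset Strict Implicit. Unset Printing Implicit Defensive.
Import Order.TTheory GRing.Theory Num.Theory.
Local Open Scope ring_scope.

Section Crooked.
Variable R : realFieldType.

(* The form matrix J of R^{2n,2n-1}: 1-based J_{i,4n-i} = (-1)^i, i.e.
   0-based entry (i,j) is (-1)^(i+1) when i + j = 4n-2, and 0 otherwise. *)
Definition Jmx (n : nat) : 'M[R]_(4 * n - 1) :=
  \matrix_(i, j) (if (i + j == 4 * n - 2)%N then (-1) ^+ (i.+1) else 0).

Definition Jform (n : nat) (v w : 'rV[R]_(4 * n - 1)) : R :=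
  (v *m Jmx n *m w^T) 0 0.

Definition is_Jbasis (n : nat) (E : 'M[R]_(4 * n - 1)) : Prop :=
  E *m Jmx n *m E^T = Jmx n.

Definition pos_oriented (m : nat) (E : 'M[R]_m) : Prop := 0 < \det E.

(* the k-th (0-based) basis vector, 0 if k is out of range *)
Definition rowk (m : nat) (E : 'M[R]_m) (k : nat) : 'rV[R]_m :=
  \row_j (if insub k is Some i then E i j else 0).

Definition coordseq (m : nat) (E : 'M[R]_m) (v : 'rV[R]_m) : seq R :=
  [seq (v *m invmx E) 0 i | i <- enum 'I_m].

(* s (true = +, false = -) is a sign assignment for c: it agrees with the
   signs of the nonzero entries; zero entries get arbitrary signs. *)
Definition sgn_compat (c : seq R) (s : seq bool) : bool :=
  all2 (fun (x : R) (b : bool) => ((0 < x) ==> b) && ((x < 0) ==> ~~ b)) c s.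

Definition nchanges (s : seq bool) : nat :=
  (\sum_(i < (size s).-1) (nth false s i != nth false s i.+1))%N.

Definition Splus (c : seq R) : nat :=
  (\max_(s : (size c).-tuple bool | sgn_compat c s) nchanges s)%N.

Definition inH (n : nat) (E : 'M[R]_(4 * n - 1)) (v : 'rV[R]_(4 * n - 1)) : Prop :=
  let c := coordseq E v in
  v != 0 /\
  ((Splus c < 2 * n - 1)%N \/
   (Splus c = (2 * n - 1)%N /\
    exists s : (size c).-tuple bool,
      [/\ sgn_compat c s, nchanges s = Splus c & nth false s (size c).-1 = true])).

Definition inSQ (n : nat) (E : 'M[R]_(4 * n - 1)) (u : 'rV[R]_(4 * n - 1)) : Prop :=
  forall v, inH E v -> inH E (u + v).

End Crooked.

(* In E-coordinates, membership in H_E is a condition on sign changes: at most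
   2n-1 of them, and when there are exactly 2n-1 some maximising sign assignment
   ends in +.  Lowering the first coordinate or raising the last one can only
   create a change at that end: at the front it makes the first sign -, hence
   (2n-1 being odd) the last sign + once the count reaches 2n-1; at the back it
   makes the last sign + directly.  So the cone lies in SQ(E).  Conversely, if a
   middle coordinate of u is nonzero, or the first is positive, or the last
   negative, take v with nonzero coordinates that dominate u everywhere except at
   that place, where v is small and of the opposite sign.  Then u + v has the
   signs of v flipped at that place only; choosing the signs of v constant around
   it, with 2n-2 changes (middle case) or 2n-1 changes ending in + (end cases),
   puts v in H_E while u + v has 2n changes. *)

From mathcomp Require Import all_boot all_order all_algebra zify lra.
Import Order.TTheory GRing.Theory Num.Theory.
Local Open Scope ring_scope.
Set Implicit Arguments. Unset Strict Implicit.

Lemma nchanges_nil : nchanges [::] = 0%N.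
Proof. by rewrite /nchanges big_ord0. Qed.

Lemma nchanges_cons a s : nchanges (a :: s) = ((a != head a s) + nchanges s)%N.
Proof.
case: s => [|b s]; first by rewrite /nchanges !big_ord0 eqxx.
by rewrite /nchanges /= big_ord_recl.
Qed.

Lemma nchanges_rcons s a : nchanges (rcons s a) = (nchanges s + (last a s != a))%N.
Proof.
elim: s => [|x s IH]; first by rewrite nchanges_cons nchanges_nil eqxx.
rewrite rcons_cons !nchanges_cons IH.
by case: s {IH} => [|y s] /=; rewrite ?nchanges_nil ?eqxx; lia.
Qed.

Lemma odd_nchanges_cons a s : odd (nchanges (a :: s)) = (a != last a s).
Proof.
elim: s a => [|b s IH] a; first by rewrite nchanges_cons nchanges_nil eqxx.
by rewrite nchanges_cons oddD IH /=; case: (last b s); case: a; case: b.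
Qed.

Definition unit_steps (f : nat -> nat) (N : nat) : Prop :=
  forall i, (i.+1 < N)%N -> f i.+1 = f i \/ f i.+1 = (f i).+1.

Lemma nchanges_mkseq_odd (b : bool) (f : nat -> nat) N : unit_steps f N ->
  nchanges (mkseq (fun i => b (+) odd (f i)) N) = (f N.-1 - f 0)%N.
Proof.
move=> steps; rewrite /nchanges size_mkseq.
have jump (i : 'I_N.-1) : ((nth false (mkseq (fun i => b (+) odd (f i)) N) i
     != nth false (mkseq (fun i => b (+) odd (f i)) N) i.+1) : nat) = (f i.+1 - f i)%N.
  have iN : (i.+1 < N)%N by have := ltn_ord i; lia.
  rewrite !nth_mkseq //; last by lia.
  case: (steps i iN) => ->; first by rewrite eqxx subnn.
  by rewrite oddS; case: b; case: (odd (f i)) => /=; lia.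
rewrite (eq_bigr _ (fun i _ => jump i)) -(big_mkord xpredT (fun i => f i.+1 - f i)%N).
by apply: telescope_sumn_in => // i /andP[_ iN]; case: (steps i) => [|->|->]; lia.
Qed.

Lemma odd_flip (b : bool) x p i :
  b (+) odd (x + ((p <= i) + (p < i))) = (b (+) odd x) (+) (i == p).
Proof. by case: (ltngtP p i) => _; rewrite oddD /=; case: b; case: (odd x). Qed.

Section SignChanges.
Variable R : realFieldType.
Implicit Types (x : R) (c : seq R) (s : seq bool) (b : bool).

Definition sign_ok (x : R) (b : bool) : bool := if b then 0 <= x else x <= 0.

Lemma sign_okE (x : R) b : ((0 < x) ==> b) && ((x < 0) ==> ~~ b) = sign_ok x b.
Proof. by case: b; rewrite /sign_ok ?implybT ?implybF ?andbT -?leNgt. Qed.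

Lemma sign_ok_gt0 (x : R) : sign_ok x (0 < x).
Proof. by rewrite /sign_ok; case: ltrgtP => // /ltW. Qed.

Lemma sign_ok_inj (x : R) b : x != 0 -> sign_ok x b -> b = (0 < x).
Proof. by rewrite /sign_ok; case: b; case: ltrgtP. Qed.

Lemma sgn_compat_cons x c b s :
  sgn_compat (x :: c) (b :: s) = sign_ok x b && sgn_compat c s.
Proof. by rewrite /sgn_compat /= sign_okE. Qed.

Lemma sgn_compat_rcons c x s b :
  sgn_compat (rcons c x) (rcons s b) = sgn_compat c s && sign_ok x b.
Proof.
elim: c s => [|y c IH] [|a s] /=; rewrite ?sign_okE ?andbT //.
- by case: s => [|? ?]; rewrite /= andbF.
- by case: c {IH} => [|? ?]; rewrite /= andbF.
- by move: (IH s); rewrite /sgn_compat => ->; rewrite andbA.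
Qed.

Lemma size_sgn_compat c s : sgn_compat c s -> size s = size c.
Proof. by elim: c s => [|x c IH] [|b s] //= /andP[_ /IH ->]. Qed.

Lemma sgn_compat_nth c s : sgn_compat c s <->
  size s = size c /\ forall i, (i < size c)%N -> sign_ok (nth 0 c i) (nth false s i).
Proof.
elim: c s => [|x c IH] [|b s]; split => //; try by case.
- rewrite sgn_compat_cons => /andP[xb /IH[sz cs]].
  by split=> [|[|i]] /=; rewrite ?sz //; exact: cs.
- case=> [[sz] cs]; rewrite sgn_compat_cons (cs 0%N) //=.
  by apply/IH; split=> // i ic; exact: (cs i.+1).
Qed.

Lemma Splus_ge c s : sgn_compat c s -> (nchanges s <= Splus c)%N.
Proof.
move=> cs; have sz : size s == size c by rewrite (size_sgn_compat cs).
exact: (leq_bigmax_cond (Tuple sz)).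
Qed.

Lemma Splus_le c m : (forall s, sgn_compat c s -> (nchanges s <= m)%N) -> (Splus c <= m)%N.
Proof. by move=> H; apply/bigmax_leqP => s /H. Qed.

Lemma Splus_attained c : exists2 s, sgn_compat c s & nchanges s = Splus c.
Proof.
have sz : size [seq 0 < x | x <- c] == size c by rewrite size_map.
have cs : sgn_compat c [seq 0 < x | x <- c].
  by elim: c {sz} => [|x c IH] //; rewrite /= sign_okE sign_ok_gt0.
have ne : (0 < #|[pred s : (size c).-tuple bool | sgn_compat c s]|)%N.
  by apply/card_gt0P; exists (Tuple sz); rewrite inE.
have [s cs' max] := eq_bigmax_cond (fun s : (size c).-tuple bool => nchanges s) ne.
by exists s; [rewrite inE in cs' | rewrite /Splus max].
Qed.

Lemma Splus_unique c sg : (forall s, sgn_compat c s <-> s = sg) -> Splus c = nchanges sg.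
Proof.
move=> H; apply/eqP; rewrite eqn_leq Splus_ge ?andbT; last exact/H.
by apply: Splus_le => s /H ->.
Qed.

Definition crooked (k : nat) (c : seq R) : Prop :=
  (Splus c < k)%N \/
  (Splus c = k /\ exists s, [/\ sgn_compat c s, nchanges s = k & last false s]).

Lemma crooked_Splus_le k c : crooked k c -> (Splus c <= k)%N.
Proof. by case=> [/ltnW|[->]]. Qed.

Lemma crooked_Splus_lt k c : crooked k c ->
  (forall s, sgn_compat c s -> nchanges s = k -> ~~ last false s) -> (Splus c < k)%N.
Proof. by case=> [//|[_ [s [cs ns ls]]]] /(_ s cs ns); rewrite ls. Qed.

Lemma crooked_of_all k c :
  (forall s, sgn_compat c s -> (nchanges s <= k)%N /\ (nchanges s = k -> last false s)) ->
  crooked k c.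
Proof.
move=> H; have le : (Splus c <= k)%N by apply: Splus_le => s /H[].
have [lt|ge] := ltnP (Splus c) k; first by left.
have eq : Splus c = k by lia.
right; split=> //; have [s cs ns] := Splus_attained c.
by exists s; split=> //; [rewrite ns eq | apply: (H s cs).2; rewrite ns eq].
Qed.

Lemma crooked_of_sub k c c' :
  (forall s, sgn_compat c' s -> sgn_compat c s) ->
  (forall s, sgn_compat c s -> nchanges s = k -> last false s -> sgn_compat c' s) ->
  crooked k c -> crooked k c'.
Proof.
move=> sub back ck.
have le : (Splus c' <= Splus c)%N by apply: Splus_le => s /sub /Splus_ge.
have [lt|ge] := ltnP (Splus c') k; first by left.
case: ck => [ltc|[eqc [s [cs ns ls]]]]; first by lia.
by right; split; [lia | exists s; split=> //; apply: back].
Qed.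

Lemma crooked_head_le k c c' : odd k -> size c' = size c ->
  (forall i, (0 < i)%N -> nth 0 c' i = nth 0 c i) -> nth 0 c' 0 <= nth 0 c 0 ->
  crooked k c -> crooked k c'.
Proof.
case: c c' => [|x t] [|x' t'] //= ok [sz] same x'x ck.
have -> : t' = t by apply: (@eq_from_nth _ 0) => // i _; exact: (same i.+1).
have head_false b s : nchanges (b :: s) = k -> last false (b :: s) -> b = false.
  by move=> ns /= ls; move: (odd_nchanges_cons b s); rewrite ns ok ls; case: (b).
(* For [x <= 0] lowering [x] only forbids the sign +; for [x > 0] the sequence has
   fewer than [k] changes and lowering [x] adds at most one, at the front. *)
have [x_le0|x_gt0] := lerP x 0.
  apply: crooked_of_sub ck => -[//|b s]; rewrite !sgn_compat_cons => /andP[xb ->].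
    by case: b xb; rewrite /sign_ok andbT => xb; [exact: le_trans x'x | exact: x_le0].
  by rewrite andbT => ns /(head_false _ _ ns) b0; rewrite b0 /sign_ok (le_trans x'x).
have ends_false s : sgn_compat (x :: t) s -> nchanges s = k -> ~~ last false s.
  case: s => [//|b s]; rewrite sgn_compat_cons => /andP[xb _] ns; apply/negP.
  by move=> /(head_false _ _ ns) b0; move: xb; rewrite b0 /sign_ok leNgt x_gt0.
have lt := crooked_Splus_lt ck ends_false.
apply: crooked_of_all => -[//|b s]; rewrite sgn_compat_cons => /andP[_ ts].
have le := @Splus_ge (x :: t) (true :: s); rewrite sgn_compat_cons ts /sign_ok ltW // in le.
have step : (nchanges (b :: s) <= (nchanges (true :: s)).+1)%N by rewrite !nchanges_cons; lia.
split=> [|ns]; first by lia.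
case: b ns {step} => [ns|/= ns]; first by have := le isT; lia.
by move: (odd_nchanges_cons false s); rewrite ns ok; case: (last false s).
Qed.

Lemma crooked_last_ge k c c' : size c' = size c ->
  (forall i, (i < (size c).-1)%N -> nth 0 c' i = nth 0 c i) ->
  nth 0 c (size c).-1 <= nth 0 c' (size c).-1 -> crooked k c -> crooked k c'.
Proof.
case/lastP: c => [|t x]; case/lastP: c' => [|t' x'] //; rewrite ?size_rcons //.
move=> [sz] /= same; rewrite !nth_rcons sz !ltnn !eqxx => xx' ck.
have -> : t' = t.
  apply: (@eq_from_nth _ 0) => // i it; rewrite sz in it.
  by have := same i it; rewrite !nth_rcons sz it.
clear sz same.
(* For [0 <= x] raising [x] only forbids the sign -; for [x < 0] the sequence has
   fewer than [k] changes and raising [x] adds at most one, at the back. *)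
have [x_ge0|x_lt0] := lerP 0 x.
  apply: crooked_of_sub ck => s; case/lastP: s => [|s b]; try by case: (t).
    rewrite !sgn_compat_rcons => /andP[-> xb].
    by case: b xb; rewrite /sign_ok => xb; [exact: x_ge0 | exact: le_trans xx' xb].
  by rewrite !sgn_compat_rcons last_rcons => /andP[-> _] _ ->; rewrite /sign_ok (le_trans x_ge0).
have ends_false s : sgn_compat (rcons t x) s -> nchanges s = k -> ~~ last false s.
  case/lastP: s => [|s b]; first by case: (t).
  rewrite sgn_compat_rcons last_rcons => /andP[_] + _.
  by case: b => //; rewrite /sign_ok leNgt x_lt0.
have lt := crooked_Splus_lt ck ends_false.
apply: crooked_of_all => s; case/lastP: s => [|s b]; first by case: (t).
rewrite sgn_compat_rcons last_rcons => /andP[ts _].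
have le := @Splus_ge (rcons t x) (rcons s false).
rewrite sgn_compat_rcons ts /sign_ok ltW // in le.
have step : (nchanges (rcons s b) <= (nchanges (rcons s false)).+1)%N.
  by rewrite !nchanges_rcons; lia.
split=> [|ns]; first by lia.
by case: b ns {step} => // ns; have := le isT; lia.
Qed.

End SignChanges.

Section Rows.
Variables (R : realFieldType) (N : nat).
Implicit Types (x d : 'rV[R]_N).

Definition rowseq x : seq R := [seq x 0 i | i <- enum 'I_N].

Lemma size_rowseq x : size (rowseq x) = N.
Proof. by rewrite size_map size_enum_ord. Qed.

Lemma nth_rowseq x (i : 'I_N) : nth 0 (rowseq x) i = x 0 i.
Proof. by rewrite (nth_map i) ?size_enum_ord // nth_ord_enum. Qed.

Lemma nth_rowseq_addZdelta x a (i0 : 'I_N) i :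
  nth 0 (rowseq (x + a *: delta_mx 0 i0)) i = nth 0 (rowseq x) i + (i == i0)%:R * a.
Proof.
have [iN|iN] := ltnP i N.
  by rewrite -[i]/(val (Ordinal iN)) !nth_rowseq !mxE eqxx mulrC.
rewrite !nth_default ?size_rowseq // (_ : (i == i0) = false) ?mul0r ?addr0 //.
by apply: gtn_eqF; apply: leq_trans iN.
Qed.

Lemma Splus_rowseq0 : (N.-1 <= Splus (rowseq (0 : 'rV[R]_N)))%N.
Proof.
have cs : sgn_compat (rowseq 0) (mkseq (fun i => false (+) odd i) N).
  apply/sgn_compat_nth; rewrite size_mkseq size_rowseq; split=> // i iN.
  by rewrite -[i]/(val (Ordinal iN)) nth_rowseq mxE /sign_ok; case: ifP.
have := Splus_ge cs; rewrite (@nchanges_mkseq_odd false id) ?subn0 //.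
by move=> i _; right.
Qed.

Lemma sgn_compat_rowseq_strict x (sg : nat -> bool) :
  (forall i : 'I_N, x 0 i != 0 /\ (0 < x 0 i) = sg i) ->
  forall s, sgn_compat (rowseq x) s <-> s = mkseq sg N.
Proof.
move=> hx s; split.
  move=> /sgn_compat_nth[sz cs]; apply: (@eq_from_nth _ false).
    by rewrite sz size_rowseq size_mkseq.
  move=> i; rewrite sz size_rowseq => iN; rewrite nth_mkseq //.
  have [nz <-] := hx (Ordinal iN); apply: sign_ok_inj nz _.
  by have := cs i; rewrite size_rowseq -[i]/(val (Ordinal iN)) nth_rowseq; apply.
move=> ->; apply/sgn_compat_nth; rewrite size_mkseq size_rowseq; split=> // i iN.
by rewrite nth_mkseq // -[i]/(val (Ordinal iN)) nth_rowseq -(hx _).2 sign_ok_gt0.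
Qed.

Lemma sign_strict (y : R) b : (if b then 0 < y else y < 0) -> y != 0 /\ (0 < y) = b.
Proof.
by case: b => hy; split; [rewrite gt_eqF | rewrite hy | rewrite lt_eqF | rewrite ltNge ltW].
Qed.

Lemma flip_sign_witness d (p : 'I_N) (sg : nat -> bool) :
  d 0 p != 0 -> sg p = ~~ (0 < d 0 p) ->
  exists c : 'rV[R]_N,
    (forall i : 'I_N, c 0 i != 0 /\ (0 < c 0 i) = sg i) /\
    (forall i : 'I_N, (d + c) 0 i != 0 /\ (0 < (d + c) 0 i) = sg i (+) (i == p)).
Proof.
move=> dp sgp.
exists (\row_i if i == p then - d 0 i / 2 else (if sg i then 1 else -1) * (`|d 0 i| + 1)).
split=> i; rewrite !mxE; have [->|ip] := eqVneq i p.
- by rewrite sgp; apply: sign_strict; case: ltrgtP dp => //= *; lra.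
- have := ler_norm (d 0 i); have := ler_norm (- d 0 i); rewrite normrN.
  by case: (sg i) => * /=; apply: sign_strict => /=; lra.
- by rewrite sgp addbT negbK; apply: sign_strict; case: ltrgtP dp => //= *; lra.
- rewrite addbF; have := ler_norm (d 0 i); have := ler_norm (- d 0 i); rewrite normrN.
  by case: (sg i) => * /=; apply: sign_strict => /=; lra.
Qed.

Lemma row_eq_two_deltas d (i0 i1 : 'I_N) : i0 != i1 ->
  (forall j, j != i0 -> j != i1 -> d 0 j = 0) ->
  d = d 0 i0 *: delta_mx 0 i0 + d 0 i1 *: delta_mx 0 i1.
Proof.
move=> ne mid; apply/rowP => j; rewrite !mxE !eqxx /=.
have [->|j0] := eqVneq j i0; first by rewrite (negbTE ne) mulr1 mulr0 addr0.
have [->|j1] := eqVneq j i1; first by rewrite mulr0 mulr1 add0r.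
by rewrite !mulr0 addr0 mid.
Qed.

Lemma rowk_delta (E : 'M[R]_N) k (kN : (k < N)%N) :
  rowk E k = delta_mx 0 (Ordinal kN) *m E.
Proof. by apply/rowP => j; rewrite -rowE !mxE (insubT (fun i => i < N)%N kN). Qed.

End Rows.

Section StemQuadrant.
Variables (R : realFieldType) (n : nat) (E : 'M[R]_(4 * n - 1)).
Hypotheses (n_gt0 : (0 < n)%N) (E_unit : E \in unitmx).
Local Notation N := (4 * n - 1)%N.
Local Notation k := (2 * n - 1)%N.

Lemma odd_k : odd k.
Proof. have -> : k = (2 * n.-1).+1 by lia. by rewrite oddS oddM. Qed.

Lemma coordseqE v : coordseq E v = rowseq (v *m invmx E).
Proof. by []. Qed.

Lemma inH_crooked v : inH E v <-> crooked k (coordseq E v).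
Proof.
split=> [[_ [lt|[eq [s [cs ns ls]]]]]|ck]; first by left.
  right; split=> //; exists s; split=> //; first by rewrite ns eq.
  by rewrite -nth_last size_tuple ls.
split.
  apply/eqP => v0; move/crooked_Splus_le: (ck); rewrite coordseqE v0 mul0mx.
  by move/(leq_trans (@Splus_rowseq0 R N)); lia.
case: ck => [lt|[eq [s [cs ns ls]]]]; [by left | right; split=> //].
have sz : size s == size (coordseq E v) by rewrite (size_sgn_compat cs).
by exists (Tuple sz); split=> //=; rewrite ?ns ?eq // -(eqP sz) nth_last.
Qed.

Lemma inSQ_flip_contra u (p : 'I_N) (b : bool) (f : nat -> nat) : inSQ E u ->
  (u *m invmx E) 0 p != 0 -> b (+) odd (f p) = ~~ (0 < (u *m invmx E) 0 p) ->
  f 0 = 0%N -> unit_steps f N ->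
  f p.-1 = f p -> f p.+1 = f p ->
  (f N.-1 < k)%N \/ (f N.-1 = k /\ b (+) odd (f N.-1)) ->
  (k < f N.-1 + ((0 < p) + (p < N.-1)))%N -> False.
Proof.
move=> sq dp bp f0 steps fl fr good bad.
set d := u *m invmx E in dp bp.
pose sv i := b (+) odd (f i).
(* Flipping the sign at [p], where [f] is flat, adds a change on each side of [p]. *)
pose g i := (f i + ((p <= i) + (p < i)))%N.
pose suv i := b (+) odd (g i).
have g_steps : unit_steps g N.
  move=> i iN; have flat : p = i.+1 :> nat \/ p = i :> nat -> f i.+1 = f i.
    by case=> ep; [move: fl; rewrite ep => /esym | move: fr; rewrite ep].
  by have := steps i iN; rewrite /g; lia.
have [c [c_sg dc_sg]] := flip_sign_witness (sg := sv) dp bp.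
have dc_sg' (i : 'I_N) : (d + c) 0 i != 0 /\ (0 < (d + c) 0 i) = suv i.
  by rewrite /suv /g odd_flip; exact: dc_sg.
have v_in : inH E (c *m E).
  apply/inH_crooked; rewrite coordseqE mulmxK //.
  apply: crooked_of_all => s /(sgn_compat_rowseq_strict (sg := sv) c_sg) ->.
  rewrite (nchanges_mkseq_odd _ steps) f0 subn0 -nth_last size_mkseq nth_mkseq; last by lia.
  by rewrite /sv; case: good => [|[->]]; split=> //; lia.
have := sq _ v_in; rewrite inH_crooked coordseqE mulmxDl mulmxK // -/d.
move/crooked_Splus_le; rewrite (Splus_unique (sgn_compat_rowseq_strict (sg := suv) dc_sg')).
by rewrite (nchanges_mkseq_odd _ g_steps) /g f0; have := ltn_ord p; lia.
Qed.

Lemma inSQ_coord_mid u (j : 'I_N) : inSQ E u -> (0 < j)%N -> (j < N.-1)%N ->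
  (u *m invmx E) 0 j = 0.
Proof.
move=> sq j_gt0 j_lt; apply/eqP/negPn/negP => dj.
(* 2n-2 sign changes, none next to [j] *)
pose f i := minn (2 * n - 2) (i - (j <= i) - (j < i)).
apply: (@inSQ_flip_contra u j (~~ (0 < (u *m invmx E) 0 j) (+) odd (f j)) f) => //.
  by rewrite -addbA addbb addbF.
- by move=> i _; rewrite /f; lia.
- by rewrite /f; lia.
- by rewrite /f; lia.
- by left; rewrite /f; lia.
- by rewrite /f; lia.
Qed.

Lemma inSQ_coord_head u (i0 : 'I_N) : inSQ E u -> i0 = 0%N :> nat ->
  (u *m invmx E) 0 i0 <= 0.
Proof.
move=> sq e0; rewrite leNgt; apply/negP => d0.
(* 2n-1 sign changes, none next to [i0] *)
pose f i := minn k (i - (i0 <= i)).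
have [fi0 fN] : f i0 = 0%N /\ f N.-1 = k by rewrite /f; lia.
apply: (@inSQ_flip_contra u i0 false f).
all: rewrite ?(gt_eqF d0) ?fi0 ?d0 ?fN ?odd_k //.
- by move=> i _; rewrite /f; lia.
- by rewrite /f; lia.
- by rewrite /f; lia.
- by right.
- by lia.
Qed.

Lemma inSQ_coord_last u (iL : 'I_N) : inSQ E u -> iL = N.-1 :> nat ->
  0 <= (u *m invmx E) 0 iL.
Proof.
move=> sq eL; rewrite leNgt; apply/negP => dL.
(* 2n-1 sign changes, none next to [iL] *)
pose f i := minn k (i - (iL <= i)).
have [fiL fN] : f iL = k /\ f N.-1 = k by rewrite /f; lia.
apply: (@inSQ_flip_contra u iL false f).
all: rewrite ?(lt_eqF dL) ?fiL ?(lt_gtF dL) ?fN ?odd_k //.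
- by move=> i _; rewrite /f; lia.
- by rewrite /f; lia.
- by rewrite /f; lia.
- by right.
- by lia.
Qed.

Lemma inSQ_coordE u (i0 iL : 'I_N) : inSQ E u -> i0 = 0%N :> nat -> iL = N.-1 :> nat ->
  u *m invmx E =
    (u *m invmx E) 0 i0 *: delta_mx 0 i0 + (u *m invmx E) 0 iL *: delta_mx 0 iL.
Proof.
move=> sq e0 eL; apply: row_eq_two_deltas => [|j]; rewrite -!(inj_eq val_inj) /= ?e0 ?eL.
  by apply/eqP; lia.
by move=> j0 jL; apply: inSQ_coord_mid => //; have := ltn_ord j; lia.
Qed.

Lemma inSQ_cone a b (i0 iL : 'I_N) : i0 = 0%N :> nat -> iL = N.-1 :> nat ->
  0 <= a -> 0 <= b -> inSQ E ((- a *: delta_mx 0 i0 + b *: delta_mx 0 iL) *m E).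
Proof.
move=> e0 eL a0 b0 v; rewrite !inH_crooked !coordseqE mulmxDl mulmxK //.
set y := v *m invmx E => cy.
rewrite addrAC [- a *: _ + y]addrC.
apply: (@crooked_last_ge _ _ (rowseq (y + - a *: delta_mx 0 i0))).
- by rewrite !size_rowseq.
- move=> i; rewrite size_rowseq => iN.
  by rewrite nth_rowseq_addZdelta eL (ltn_eqF iN) mul0r addr0.
- by rewrite size_rowseq [in X in _ <= X]nth_rowseq_addZdelta -eL eqxx mul1r lerDl.
apply: (@crooked_head_le _ _ (rowseq y)) cy => //.
- exact: odd_k.
- by rewrite !size_rowseq.
- by move=> i i_gt0; rewrite nth_rowseq_addZdelta e0 gtn_eqF // mul0r addr0.
- by rewrite nth_rowseq_addZdelta e0 eqxx mul1r gerDl oppr_le0.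
Qed.

End StemQuadrant.

Theorem proposition5p5 (R : realFieldType) (n : nat) (E : 'M[R]_(4 * n - 1)) :
  (0 < n)%N -> is_Jbasis E -> pos_oriented E ->
  forall u : 'rV[R]_(4 * n - 1),
    inSQ E u <->
    exists alpha beta : R,
      [/\ 0 <= alpha, 0 <= beta &
          u = - alpha *: rowk E 0 + beta *: rowk E (4 * n - 2)].
Proof.
move=> n_gt0 _ E_pos u.
have E_unit : E \in unitmx by rewrite unitmxE unitfE gt_eqF.
have lt0N : (0 < 4 * n - 1)%N by lia.
have ltLN : (4 * n - 2 < 4 * n - 1)%N by lia.
have eL : Ordinal ltLN = (4 * n - 1).-1 :> nat by rewrite /=; lia.
have rowkE a b : - a *: rowk E 0 + b *: rowk E (4 * n - 2) =
    (- a *: delta_mx 0 (Ordinal lt0N) + b *: delta_mx 0 (Ordinal ltLN)) *m E.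
  by rewrite (rowk_delta E lt0N) (rowk_delta E ltLN) !scalemxAl -mulmxDl.
split=> [sq | [a [b [a0 b0 ->]]]]; last by rewrite rowkE; exact: inSQ_cone.
exists (- (u *m invmx E) 0 (Ordinal lt0N)), ((u *m invmx E) 0 (Ordinal ltLN)); split.
- by rewrite oppr_ge0 (inSQ_coord_head n_gt0 E_unit sq).
- exact: (inSQ_coord_last n_gt0 E_unit sq).
- by rewrite rowkE opprK -(inSQ_coordE n_gt0 E_unit sq) ?mulmxKV.
Qed.
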